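(* Let $d\ge 1$, $T>0$, let $U:\mathbb{R}^d\to\mathbb{R}$ be continuously differentiable, and let $G:\mathbb{R}^d\to\mathbb{R}^{d\times d}$ be continuous with $G(y)$ symmetric and $v^{\intercal}G(y)v\ge v^{\intercal}\Gamma v>0$ for all $y\in\mathbb{R}^d$ and all $v\neq 0$, where $\Gamma$ is a fixed symmetric positive definite matrix. Consider the gradient system $G(y(t))\dot y(t)=-\nabla U(y(t))$, $y(0)=y_0\in\mathbb{R}^d$. Let $\varphi_0,\ldots,\varphi_{r-1}$ be sufficiently smooth, linearly independent real functions on $[0,T]$, let $0<h\le T$, and let $X_h,Y_h$, $\mathcal{P}_h$ be as described in the context. Suppose $\tilde u\in X_h$ satisfies $\tilde u(0)=y_0$ and $$G(\tilde u(\tau))\,\tilde u'(\tau)=-\mathcal{P}_h\big(\nabla U(\tilde u(\cdot))\big)(\tau),\qquad \tau\in[0,1],$$ and set $y_1=\tilde u(1)$ (the FFED method). Then $U(y_1)\le U(y_0)$; i.e. the FFED method is energy-diminishing for every stepsize $h$.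
   Context: Function spaces: $Y_h$ is the set of $\mathbb{R}^d$-valued functions on $[0,1]$ of the form $\sum_{i=0}^{r-1}\tilde\varphi_i(\tau)W_i$ with $W_i\in\mathbb{R}^d$, where $\tilde\varphi_i(\tau)=\varphi_i(\tau h)$; $X_h$ is the set of $\mathbb{R}^d$-valued functions on $[0,1]$ of the form $W+\sum_{i=0}^{r-1}\big(\int_0^{\tau h}\varphi_i(s)\,ds\big)W_i$ with $W,W_i\in\mathbb{R}^d$. Equivalently $\tilde u(\tau)=u(\tau h)$ for $u$ in the space $X=\mathrm{span}\{1,\int_0^t\varphi_0,\ldots,\int_0^t\varphi_{r-1}\}$, and the notation $\tilde u'(\tau)$ means $u'(\tau h)=\frac1h\frac{d}{d\tau}\tilde u(\tau)$, which lies in $Y_h$. Projection: for a continuous $\tilde w:[0,1]\to\mathbb{R}^d$, $\mathcal{P}_h\tilde w$ is the unique element of $Y_h$ such that $\int_0^1\tilde v(\tau)\cdot\mathcal{P}_h\tilde w(\tau)\,d\tau=\int_0^1\tilde v(\tau)\cdot\tilde w(\tau)\,d\tau$ for all $\tilde v\in Y_h$, where $\cdot$ denotes entrywise multiplication of vectors (so each component of $\mathcal{P}_h\tilde w$ is the $L^2(0,1)$-orthogonal projection of the corresponding component of $\tilde w$ onto $\mathrm{span}\{\tilde\varphi_0,\ldots,\tilde\varphi_{r-1}\}$). Explicitly $\mathcal{P}_h\tilde w(\tau)=\int_0^1\sum_{i=0}^{r-1}\tilde\psi_i(\tau)\tilde\psi_i(\sigma)\tilde w(\sigma)\,d\sigma$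 with $\{\tilde\psi_i\}$ an $L^2(0,1)$-orthonormal basis of $\mathrm{span}\{\tilde\varphi_0,\ldots,\tilde\varphi_{r-1}\}$. *)

From HB Require Import structures.
From mathcomp Require Import all_boot all_order all_algebra.
From mathcomp Require Import all_classical all_reals all_analysis.
Set Implicit Arguments. Unset Strict Implicit. Unset Printing Implicit Defensive.
Import Order.TTheory GRing.Theory Num.Theory.
Import numFieldNormedType.Exports.
Local Open Scope classical_set_scope.
Local Open Scope ring_scope.

Definition grad (R : realType) (d : nat) (U : 'cV[R]_d -> R) (y : 'cV[R]_d)
  : 'cV[R]_d := \col_k 'D_(delta_mx k 0) U y.

Definition Yfun (R : realType) (d r : nat) (phi : 'I_r -> R -> R) (h : R)
  (W : 'I_r -> 'cV[R]_d) : R -> 'cV[R]_d :=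
  fun tau => \sum_(i < r) phi i (tau * h) *: W i.

Definition Xfun (R : realType) (d r : nat) (phi : 'I_r -> R -> R) (h : R)
  (W0 : 'cV[R]_d) (W : 'I_r -> 'cV[R]_d) : R -> 'cV[R]_d :=
  fun tau => W0 + \sum_(i < r)
     (\int[lebesgue_measure]_(s in `[0, tau * h]) phi i s) *: W i.

Definition in_Yh (R : realType) (d r : nat) (phi : 'I_r -> R -> R) (h : R)
  (v : R -> 'cV[R]_d) : Prop :=
  exists W : 'I_r -> 'cV[R]_d,
    forall tau : R, tau \in `[0, 1] -> v tau = Yfun phi h W tau.

Definition is_Ph (R : realType) (d r : nat) (phi : 'I_r -> R -> R) (h : R)
  (w p : R -> 'cV[R]_d) : Prop :=
  in_Yh phi h p /\
  forall v : R -> 'cV[R]_d, in_Yh phi h v ->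
    forall k : 'I_d,
      \int[lebesgue_measure]_(tau in `[0, 1]) (v tau k 0 * p tau k 0)
      = \int[lebesgue_measure]_(tau in `[0, 1]) (v tau k 0 * w tau k 0).

(* Write u = Xfun phi h W0 W for the FFED solution, so that d/dtau u = h Y with
   Y = Yfun phi h W in Y_h. By the chain rule and the fundamental theorem of
   calculus, U(y1) - U(y0) = h * int_0^1 Y . grad U(u). As Y lies in Y_h, the
   defining property of P_h lets grad U(u) be replaced by P_h grad U(u), which
   the FFED equation identifies with -G(u) Y; the integrand becomes the
   quadratic form -Y^T G(u) Y <= 0. *)

From HB Require Import structures.
From mathcomp Require Import all_boot all_order all_algebra.
From mathcomp Require Import all_classical all_reals all_analysis.
Set Implicit Arguments. Unset Strict Implicit. Unset Printing Implicit Defensive.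
Import Order.TTheory GRing.Theory Num.Theory.
Import numFieldNormedType.Exports.
Local Open Scope classical_set_scope.
Local Open Scope ring_scope.

Lemma col_dotE {R : pzSemiRingType} d (v w : 'cV[R]_d) :
  (v^T *m w) 0 0 = \sum_(k < d) v k 0 * w k 0.
Proof. by rewrite mxE; apply: eq_bigr => k _; rewrite mxE. Qed.

Section within_continuity.
Context {T : topologicalType}.

Lemma within_continuous_comp_within {U V : topologicalType} (A : set T) (B : set U)
    (f : T -> U) (g : U -> V) :
  {within A, continuous f} -> f @` A `<=` B -> {within B, continuous g} ->
  {within A, continuous (g \o f)}.
Proof.
move=> /subspace_continuousP cf fAB /subspace_continuousP cg.
apply/subspace_continuousP => x Ax S /= gS.
have := cf x Ax _ (cg _ (fAB _ (imageP _ Ax)) _ gS).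
rewrite /nbhs /= /within /=; apply: filterS => y gfS Ay.
exact: gfS Ay (fAB _ (imageP _ Ay)).
Qed.

Lemma within_continuous_sum {K : numFieldType} {V : normedModType K} (A : set T)
    n (f : 'I_n -> T -> V) :
  (forall i, {within A, continuous (f i)}) ->
  {within A, continuous (fun x => \sum_(i < n) f i x)}.
Proof.
elim: n f => [|n IH] f cf.
  by under eq_fun do rewrite big_ord0; exact: continuous_subspaceT (@cst_continuous _ _ 0).
under eq_fun do rewrite big_ord_recr /=.
by apply: within_continuousD; [exact: IH | exact: cf].
Qed.

Lemma within_continuous_lincomb {K : numFieldType} {V : normedModType K} (A : set T)
    n (c : 'I_n -> T -> K) (w : 'I_n -> V) :
  (forall i, {within A, continuous (c i)}) ->
  {within A, continuous (fun x => \sum_(i < n) c i x *: w i)}.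
Proof.
move=> cc; apply: within_continuous_sum => i.
exact: within_continuous_comp A (c i) ( *:%R^~ (w i))
  (fun y _ => @scalel_continuous K V (w i) y) (cc i).
Qed.

Lemma within_continuousM {K : numFieldType} (A : set T) (f g : T -> K) :
  {within A, continuous f} -> {within A, continuous g} ->
  {within A, continuous (fun x => f x * g x)}.
Proof. by move=> cf cg x; apply: continuousM; [exact: cf | exact: cg]. Qed.

Lemma within_continuous_coord {K : numFieldType} (A : set T) m n
    (M : T -> 'M[K]_(m, n)) i j :
  {within A, continuous M} -> {within A, continuous (fun x => M x i j)}.
Proof.
exact: within_continuous_comp A M (fun N : 'M[K]_(m, n) => N i j)
  (fun N _ => @coord_continuous K m n i j N).
Qed.

Lemma within_continuous_dot {K : numFieldType} (A : set T) d (v w : T -> 'cV[K]_d) :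
  {within A, continuous v} -> {within A, continuous w} ->
  {within A, continuous (fun x => ((v x)^T *m w x) 0 0)}.
Proof.
move=> cv cw; under eq_fun do rewrite col_dotE.
apply: within_continuous_sum => k.
by apply: within_continuousM; exact: within_continuous_coord.
Qed.

End within_continuity.

Section integrals.
Context {dT : measure_display} {T : measurableType dT} {R : realType}
  (mu : {measure set T -> \bar R}) (D : set T).
Hypothesis mD : measurable D.

Lemma Rintegral_sum (I : Type) (s : seq I) (P : pred I) (f : I -> T -> R) :
  (forall i, mu.-integrable D (EFin \o f i)) ->
  \int[mu]_(x in D) (\sum_(i <- s | P i) f i x)
  = \sum_(i <- s | P i) \int[mu]_(x in D) f i x.
Proof.
move=> intf; rewrite /Rintegral.
under eq_integral => x _ do rewrite /= -sumEFin.
rewrite integral_sum // sum_fine // => i _.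
exact (integrable_fin_num mD (intf i)).
Qed.

Lemma Rintegral_le0 (f : T -> R) :
  mu.-integrable D (EFin \o f) -> (forall x, D x -> f x <= 0) ->
  \int[mu]_(x in D) f x <= 0.
Proof.
move=> intf fle0; rewrite -oppr_ge0 -mulN1r -RintegralZl //.
by apply: Rintegral_ge0 => x Dx; rewrite mulN1r oppr_ge0 fle0.
Qed.

End integrals.

Lemma continuous_segment_integrable {R : realType} (a b : R) (f : R -> R) :
  {within `[a, b], continuous f} -> lebesgue_measure.-integrable `[a, b] (EFin \o f).
Proof. by apply: continuous_compact_integrable; exact: segment_compact. Qed.

Section derivatives.
Context {R : realType}.

Lemma is_derive1Zl {V : normedModType R} (k : R -> R) (w : V) (x dk : R) :
  is_derive x 1 k dk -> is_derive x 1 (fun z => k z *: w) (dk *: w).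
Proof.
move=> kd; have kdiff : differentiable k x by apply/derivable1_diffP; exact: ex_derive.
apply: DeriveDef; first by apply/derivable1_diffP; exact: differentiableZl.
rewrite deriveE; last exact: differentiableZl.
by rewrite diffZl //= -(deriveE _ kdiff) derive_val.
Qed.

Lemma is_derive_integral_upper (f : R -> R) (a b t : R) :
  {within `[a, b], continuous f} -> a < t < b ->
  is_derive t 1 (fun x => \int[lebesgue_measure]_(s in `[a, x]) f s) (f t).
Proof.
move=> cf /andP[a_lt_t t_lt_b].
have ab : a < b by exact: lt_trans t_lt_b.
have ct : {for t, continuous f}.
  by apply: within_continuous_continuous ab cf _; rewrite in_itv /= a_lt_t t_lt_b.
have [dF F'] := continuous_FTC1_closed t_lt_b (continuous_segment_integrable cf) a_lt_t ct.
by apply: DeriveDef => //; rewrite -derive1E.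
Qed.

Lemma is_derive_comp_grad d (U : 'cV[R]_d -> R) (u : R -> 'cV[R]_d) (t : R) du :
  differentiable U (u t) -> is_derive t 1 u du ->
  is_derive t 1 (U \o u) ((du^T *m grad U (u t)) 0 0).
Proof.
move=> dU du_.
have du' : differentiable u t by apply/derivable1_diffP; exact: ex_derive.
have dUu : differentiable (U \o u) t by exact: differentiable_comp.
apply: DeriveDef; first exact/derivable1_diffP.
rewrite deriveE // diff_comp //= -(deriveE _ du') (@derive_val _ _ _ _ _ _ _ du_).
rewrite [in LHS](matrix_sum_delta du) linear_sum col_dotE; apply: eq_bigr => k _.
by rewrite big_ord1 linearZ /= /grad mxE deriveE.
Qed.

End derivatives.

Section ffed_spaces.
Context {R : realType} {d r : nat} (phi : 'I_r -> R -> R) (T h : R).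
Hypothesis cphi : forall i, {within `[0, T], continuous (phi i)}.
Hypotheses (h_gt0 : 0 < h) (h_leT : h <= T).

Lemma within_continuous_rescale (g : R -> R) :
  {within `[0, T], continuous g} -> {within `[0, 1], continuous (fun t => g (t * h))}.
Proof.
move=> cg.
have ch : {within `[0, 1], continuous (fun t : R => t * h)}.
  by apply: continuous_subspaceT => x; exact: mulrr_continuous.
apply: (within_continuous_comp_within ch _ cg).
move=> _ [t /= t01 <-]; move: t01; rewrite !in_itv /= => /andP[t_ge0 t_le1].
have h_ge0 := ltW h_gt0.
by rewrite mulr_ge0 //= (le_trans _ h_leT) // ler_piMl.
Qed.

Lemma Yfun_continuous (W : 'I_r -> 'cV[R]_d) :
  {within `[0, 1], continuous (Yfun phi h W)}.
Proof. by apply: within_continuous_lincomb => i; exact: within_continuous_rescale. Qed.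

Lemma in_Yh_continuous (v : R -> 'cV[R]_d) :
  in_Yh phi h v -> {within `[0, 1], continuous v}.
Proof.
move=> [W vW]; apply: (subspace_eq_continuous _ (Yfun_continuous (W := W))).
by move=> t /set_mem /vW.
Qed.

Lemma Xfun_continuous (W0 : 'cV[R]_d) (W : 'I_r -> 'cV[R]_d) :
  {within `[0, 1], continuous (Xfun phi h W0 W)}.
Proof.
have T_ge0 : 0 <= T by rewrite ltW // (lt_le_trans h_gt0).
apply: within_continuousD.
  by apply: continuous_subspaceT => x; exact: cst_continuous.
apply: within_continuous_lincomb => i.
exact: within_continuous_rescale
  (parameterized_integral_continuous T_ge0 (continuous_segment_integrable (@cphi i))).
Qed.

Lemma is_derive_Xfun (W0 : 'cV[R]_d) (W : 'I_r -> 'cV[R]_d) (tau : R) :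
  0 < tau < 1 -> is_derive tau 1 (Xfun phi h W0 W) (h *: Yfun phi h W tau).
Proof.
move=> /andP[tau_gt0 tau_lt1].
have tauh : 0 < tau * h < T.
  by rewrite mulr_gt0 //= (lt_le_trans _ h_leT) // gtr_pMl.
have -> : Xfun phi h W0 W = cst W0 + \sum_(i < r)
    (fun t => (\int[lebesgue_measure]_(s in `[0, t * h]) phi i s) *: W i).
  by rewrite fct_sumE.
rewrite -[h *: _]add0r /Yfun scaler_sumr.
apply: is_deriveD.
apply: is_derive_sum => i; rewrite scalerA mulrC; apply: is_derive1Zl.
apply: (is_derive1_comp (f := fun t => \int[lebesgue_measure]_(s in `[0, t]) phi i s)).
  exact: is_derive_integral_upper (@cphi i) tauh.
by apply: is_derive_eq; rewrite scaler0 add0r; exact: mulr1.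
Qed.

End ffed_spaces.

Lemma gradient_theorem {R : realType} d (U : 'cV[R]_d -> R) (u u' : R -> 'cV[R]_d) (a b : R) :
  a < b -> (forall y, differentiable U y) -> continuous (grad U) ->
  {within `[a, b], continuous u} -> {within `[a, b], continuous u'} ->
  (forall t, a < t < b -> is_derive t 1 u (u' t)) ->
  U (u b) - U (u a)
  = \int[lebesgue_measure]_(t in `[a, b]) ((u' t)^T *m grad U (u t)) 0 0.
Proof.
move=> ab dU cgradU cu cu' du.
have dUu t : a < t < b -> is_derive t 1 (U \o u) (((u' t)^T *m grad U (u t)) 0 0).
  by move=> /du; exact: is_derive_comp_grad.
have cUu : {within `[a, b], continuous (U \o u)}.
  by apply: within_continuous_comp cu => y _; exact: differentiable_continuous.
have cf : {within `[a, b], continuous (fun t => ((u' t)^T *m grad U (u t)) 0 0)}.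
  apply: within_continuous_dot cu' _.
  by apply: within_continuous_comp cu => y _; exact: cgradU.
have [_ Ua Ub] := (continuous_within_itvP _ ab).1 cUu.
have UuLR : derivable_oo_LRcontinuous (U \o u) a b.
  by split => // t; rewrite in_itv => /dUu dt; exact: ex_derive.
have Uu' : {in `]a, b[, derive1 (U \o u) =1 fun t => ((u' t)^T *m grad U (u t)) 0 0}.
  by move=> t; rewrite in_itv => /dUu dt; rewrite derive1E derive_val.
by rewrite /Rintegral (continuous_FTC2 ab cf UuLR Uu') -EFinB.
Qed.

Lemma is_Ph_dot {R : realType} d r (phi : 'I_r -> R -> R) (h : R) (w p v : R -> 'cV[R]_d) :
  is_Ph phi h w p -> in_Yh phi h v ->
  {within `[0, 1], continuous v} -> {within `[0, 1], continuous w} ->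
  {within `[0, 1], continuous p} ->
  \int[lebesgue_measure]_(t in `[0, 1]) ((v t)^T *m p t) 0 0
  = \int[lebesgue_measure]_(t in `[0, 1]) ((v t)^T *m w t) 0 0.
Proof.
move=> [_ orth] vY cv cw cp.
have int_coord (f : R -> 'cV[R]_d) k : {within `[0, 1], continuous f} ->
    lebesgue_measure.-integrable `[0, 1] (EFin \o fun t => v t k 0 * f t k 0).
  by move=> cf; apply/continuous_segment_integrable/within_continuousM;
    exact: within_continuous_coord.
under eq_Rintegral do rewrite col_dotE.
under [RHS]eq_Rintegral do rewrite col_dotE.
rewrite !Rintegral_sum // => [|k|k]; try exact: int_coord.
by apply: eq_bigr => k _; exact: orth.
Qed.

Lemma quad_form_ge0 {R : realFieldType} d (A Gam : 'M[R]_d) :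
  (forall v : 'cV[R]_d, v != 0 -> 0 < (v^T *m Gam *m v) 0 0) ->
  (forall v : 'cV[R]_d, v != 0 -> (v^T *m Gam *m v) 0 0 <= (v^T *m A *m v) 0 0) ->
  forall v : 'cV[R]_d, 0 <= (v^T *m A *m v) 0 0.
Proof.
move=> Gam_pos A_ge_Gam v; have [->|v0] := eqVneq v 0; first by rewrite mulmx0 mxE.
exact: ltW (lt_le_trans (Gam_pos v v0) (A_ge_Gam v v0)).
Qed.

Theorem theorem2p4 (R : realType) (d r : nat) (T h : R)
  (U : 'cV[R]_d -> R) (G : 'cV[R]_d -> 'M[R]_d) (Gam : 'M[R]_d)
  (phi : 'I_r -> R -> R) (y0 W0 : 'cV[R]_d) (W : 'I_r -> 'cV[R]_d) :
  (0 < d)%N ->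
  0 < T ->
  (* U continuously differentiable *)
  (forall y, differentiable U y) ->
  continuous (grad U) ->
  (* G continuous, symmetric, uniformly bounded below by Gamma *)
  continuous G ->
  (forall y, (G y)^T = G y) ->
  Gam^T = Gam ->
  (forall v : 'cV[R]_d, v != 0 -> 0 < (v^T *m Gam *m v) 0 0) ->
  (forall (y v : 'cV[R]_d), v != 0 ->
      (v^T *m Gam *m v) 0 0 <= (v^T *m G y *m v) 0 0) ->
  (* basis functions: continuous and linearly independent on [0,T] *)
  (forall i, {within `[0, T], continuous (phi i)}) ->
  (forall c : 'I_r -> R,
      (forall t, t \in `[0, T] -> \sum_(i < r) c i * phi i t = 0) ->
      forall i, c i = 0) ->
  0 < h -> h <= T ->
  (* u~ in X_h with u~(0) = y0 *)
  Xfun phi h W0 W 0 = y0 ->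
  (* the FFED collocation equation G(u~) u~' = - P_h(grad U(u~)) on [0,1] *)
  (exists p : R -> 'cV[R]_d,
      is_Ph phi h (fun tau => grad U (Xfun phi h W0 W tau)) p /\
      forall tau, tau \in `[0, 1] ->
        G (Xfun phi h W0 W tau) *m Yfun phi h W tau = - p tau) ->
  U (Xfun phi h W0 W 1) <= U y0.
Proof.
move=> _ _ dU cgradU _ _ _ Gam_pos G_ge_Gam cphi _ h_gt0 h_leT <- [p [Php ffed]].
have cu := Xfun_continuous cphi h_gt0 h_leT (W0 := W0) (W := W).
have cY := Yfun_continuous cphi h_gt0 h_leT (W := W).
have cp := in_Yh_continuous cphi h_gt0 h_leT Php.1.
have du := is_derive_Xfun cphi h_gt0 h_leT W0 W.
set u := Xfun phi h W0 W in Php ffed cu du *; set Y := Yfun phi h W in ffed cY du *.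
have cgu : {within `[0, 1], continuous (grad U \o u)}.
  by apply: within_continuous_comp cu => y _; exact: cgradU.
have energy : U (u 1) - U (u 0)
    = h * \int[lebesgue_measure]_(t in `[0, 1]) ((Y t)^T *m grad U (u t)) 0 0.
  have cu' : {within `[0, 1], continuous (fun t => h *: Y t)}.
    by move=> t; apply: continuousZ; [exact: cst_continuous | exact: cY].
  rewrite (gradient_theorem ltr01 dU cgradU cu cu' du).
  rewrite -RintegralZl //; last exact/continuous_segment_integrable/within_continuous_dot.
  by apply: eq_Rintegral => t _; rewrite linearZ /= -scalemxAl mxE.
have dissipation : \int[lebesgue_measure]_(t in `[0, 1]) ((Y t)^T *m p t) 0 0 <= 0.
  apply: Rintegral_le0 => //; first exact/continuous_segment_integrable/within_continuous_dot.
  move=> t t01; rewrite -[p t]opprK -ffed // mulmxN mxE oppr_le0 mulmxA.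
  exact: quad_form_ge0 Gam_pos (G_ge_Gam _) _.
rewrite -subr_le0 energy -(is_Ph_dot Php) ?pmulr_rle0 //.
by exists W.
Qed.
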